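(* Let $M\in\mathbb{R}^{m\times k}$ and let $P\in\mathbb{R}^{k\times k}$ be a projector along $\ker M$. Let $f:\mathbb{R}^m\times\mathbb{R}^n\to\mathbb{R}^m$ be continuous and strongly monotone with respect to $x$, and let $r:\mathbb{R}^n\to\mathbb{R}^k$ be continuous. Then there is a continuous function $g:\mathbb{R}^n\to\mathbb{R}^k$ such that for all $z\in\mathbb{R}^k$ and $y\in\mathbb{R}^n$: $M^\top f(Mz,y)+P^\top r(y)=0$ if and only if $Pz=g(y)$.
   Context: $f(x,y)$ is strongly monotone with respect to $x$ if there is $c>0$ such that $\langle f(x,y)-f(\bar x,y),x-\bar x\rangle\ge c\|x-\bar x\|^2$ for all $y\in\mathbb{R}^n$ and $x,\bar x\in\mathbb{R}^m$. A projector along $\ker M$ is a matrix $P$ with $P^2=P$ and $\ker P=\ker M$. *)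

From HB Require Import structures.
From mathcomp Require Import all_boot all_order all_algebra.
From mathcomp Require Import all_classical all_reals all_analysis.
Set Implicit Arguments. Unset Strict Implicit. Unset Printing Implicit Defensive.
Import Order.TTheory GRing.Theory Num.Theory.
Import numFieldNormedType.Exports.
Local Open Scope ring_scope.

Definition dotv (R : realType) (m : nat) (u v : 'cV[R]_m) : R :=
  \sum_(i < m) u i 0 * v i 0.

Definition sqnorm (R : realType) (m : nat) (u : 'cV[R]_m) : R := dotv u u.

Definition strongly_monotone_x (R : realType) (m n : nat)
  (f : 'cV[R]_m -> 'cV[R]_n -> 'cV[R]_m) : Prop :=
  exists c : R, 0 < c /\
    forall (y : 'cV[R]_n) (x xb : 'cV[R]_m),
      dotv (f x y - f xb y) (x - xb) >= c * sqnorm (x - xb).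

Definition projector_along_ker (R : realType) (m k : nat)
  (M : 'M[R]_(m, k)) (P : 'M[R]_k) : Prop :=
  P *m P = P /\ forall z : 'cV[R]_k, P *m z = 0 <-> M *m z = 0.

From HB Require Import structures.
From mathcomp Require Import all_boot all_order all_algebra.
From mathcomp Require Import all_classical all_reals all_analysis.
From mathcomp Require Import lra.
Import Order.TTheory GRing.Theory Num.Theory.
Import numFieldNormedType.Exports.
Local Open Scope ring_scope.
Set Implicit Arguments. Unset Strict Implicit. Unset Printing Implicit Defensive.

(* A continuous map F on R^d that is strongly monotone with constant c > 0 has
   exactly one zero, and the zeros of two such maps satisfy
   c^2 |x1 - x2|^2 <= |F2 x2 - F1 x2|^2, so a zero depending on a parameter
   depends continuously on it. Existence goes by induction on d: for each value
   s of the first coordinate, the last d coordinates of F have a zero U(s),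
   continuous in s, and along this curve the first coordinate of F is a
   strongly monotone real function, which vanishes by the intermediate value
   theorem.
   Since ker P = ker M, M is injective on the range of P, so
   w |-> M^T f(MPw, y) + P^T r(y) + (1 - P)^T (1 - P) w is strongly monotone
   uniformly in y; g(y) is its zero. At w = Pz this map equals
   M^T f(Mz, y) + P^T r(y), which gives the equivalence. *)

Lemma continuous_in_fst (T U V : topologicalType) (f : T -> U -> V) y :
  continuous (fun p : T * U => f p.1 p.2) -> continuous (f^~ y).
Proof.
move=> fc x; apply: (continuous_comp (f := fun x => (x, y))) (fc (x, y)).
exact: cvg_pair cvg_id (cvg_cst y).
Qed.

Lemma continuous_in_snd (T U V : topologicalType) (f : T -> U -> V) x :
  continuous (fun p : T * U => f p.1 p.2) -> continuous (f x).
Proof.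
move=> fc y; apply: (continuous_comp (f := fun y => (x, y))) (fc (x, y)).
exact: cvg_pair (cvg_cst x) cvg_id.
Qed.

Lemma continuous_add (K : numFieldType) (T : topologicalType) (V : normedModType K)
    (f g : T -> V) :
  continuous f -> continuous g -> continuous (fun x => f x + g x).
Proof. by move=> fc gc x; exact: continuousD (fc x) (gc x). Qed.

Lemma submx_of_kernel_sub (F : fieldType) p q r (A : 'M[F]_(p, q)) (B : 'M[F]_(r, q)) :
  (forall z : 'cV[F]_q, B *m z = 0 -> A *m z = 0) -> (A <= B)%MS.
Proof.
move=> kerBA; rewrite submxE; apply/eqP/matrixP => i j.
have := kerBA (cokermx B *m delta_mx j 0); rewrite mulmxA mulmx_coker mul0mx.
by move=> /(_ erefl) /matrixP /(_ i 0); rewrite mulmxA -colE !mxE.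
Qed.

Section Euclidean.
Variable R : realType.

Lemma dotvE p (u v : 'cV[R]_p) : dotv u v = (u^T *m v) 0 0.
Proof. by rewrite /dotv mxE; apply: eq_bigr => i _; rewrite mxE. Qed.

Lemma dotvC p (u v : 'cV[R]_p) : dotv u v = dotv v u.
Proof. by apply: eq_bigr => i _; rewrite mulrC. Qed.

Lemma dotvDl p (u u' v : 'cV[R]_p) : dotv (u + u') v = dotv u v + dotv u' v.
Proof. by rewrite !dotvE linearD mulmxDl mxE. Qed.

Lemma dotv0r p (u : 'cV[R]_p) : dotv u 0 = 0.
Proof. by rewrite dotvE mulmx0 mxE. Qed.

Lemma dotv_trmx p q (A : 'M[R]_(p, q)) (u : 'cV[R]_p) (v : 'cV[R]_q) :
  dotv (A^T *m u) v = dotv u (A *m v).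
Proof. by rewrite !dotvE trmx_mul trmxK mulmxA. Qed.

Lemma dotv_col_mx p q (u u' : 'cV[R]_p) (v v' : 'cV[R]_q) :
  dotv (col_mx u v) (col_mx u' v') = dotv u u' + dotv v v'.
Proof.
by rewrite /dotv big_split_ord; congr (_ + _); apply: eq_bigr => i _;
  rewrite !(col_mxEu, col_mxEd).
Qed.

Lemma sqnorm_col_mx p q (u : 'cV[R]_p) (v : 'cV[R]_q) :
  sqnorm (col_mx u v) = sqnorm u + sqnorm v.
Proof. exact: dotv_col_mx. Qed.

Lemma sqnorm_ge0 p (v : 'cV[R]_p) : 0 <= sqnorm v.
Proof. by apply: sumr_ge0 => i _; rewrite -expr2 sqr_ge0. Qed.

Lemma sqr_entry_le_sqnorm p (v : 'cV[R]_p) i : v i 0 ^+ 2 <= sqnorm v.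
Proof.
rewrite /sqnorm /dotv (bigD1 i) //= -expr2 lerDl.
by apply: sumr_ge0 => j _; rewrite -expr2 sqr_ge0.
Qed.

Lemma sqnorm_eq0 p (v : 'cV[R]_p) : sqnorm v = 0 -> v = 0.
Proof.
move=> v0; apply/matrixP => i j; rewrite (ord1 j) mxE.
apply/eqP; rewrite -sqrf_eq0 eq_le sqr_ge0 andbT -v0.
exact: sqr_entry_le_sqnorm.
Qed.

Lemma dotv_young p (u v : 'cV[R]_p) t :
  2 * t * dotv u v <= t ^+ 2 * sqnorm u + sqnorm v.
Proof.
rewrite /sqnorm /dotv !mulr_sumr -big_split /=; apply: ler_sum => i _.
have := sqr_ge0 (t * u i 0 - v i 0); nra.
Qed.

Lemma sqnormD_le p (u v : 'cV[R]_p) : sqnorm (u + v) <= 2 * sqnorm u + 2 * sqnorm v.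
Proof.
rewrite /sqnorm /dotv !mulr_sumr -big_split /=; apply: ler_sum => i _.
rewrite mxE; have := sqr_ge0 (u i 0 - v i 0); nra.
Qed.

End Euclidean.

Section MatrixNorm.
Variable R : realType.

Lemma normr_entry_le p q (A : 'M[R]_(p, q)) i j : `|A i j| <= `|A|.
Proof.
change (`|A i j| <= mx_norm A); rewrite mx_normrE.
exact: (le_bigmax _ (fun ij : 'I_p * 'I_q => `|A ij.1 ij.2|) (i, j)).
Qed.

Lemma sqr_normr_le_sqnorm p (v : 'cV[R]_p) : `|v| ^+ 2 <= sqnorm v.
Proof.
change (mx_norm v ^+ 2 <= sqnorm v).
have [->|/mx_norm_neq0 [[i j] ->]] := eqVneq (mx_norm v) 0.
  by rewrite expr0n sqnorm_ge0.
by rewrite (ord1 j) real_normK ?num_real // sqr_entry_le_sqnorm.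
Qed.

Lemma sqnorm_le_sqr_normr p (v : 'cV[R]_p) : sqnorm v <= p%:R * `|v| ^+ 2.
Proof.
rewrite -[p in p%:R]card_ord mulr_natl -sumr_const; apply: ler_sum => i _.
rewrite -expr2 -real_normK ?num_real //.
by rewrite lerXn2r ?nnegrE // normr_entry_le.
Qed.

Lemma normr_mulmx_le p q s (A : 'M[R]_(p, q)) (B : 'M[R]_(q, s)) :
  `|A *m B| <= (\sum_i \sum_j `|A i j|) * `|B|.
Proof.
have rowA_ge0 i : 0 <= \sum_j `|A i j| by apply: sumr_ge0.
rewrite [leLHS]/Num.Def.normr /= mx_normrE.
apply: bigmax_le => [|[i k] _ /=]; first by rewrite mulr_ge0 ?sumr_ge0.
rewrite mxE (le_trans (ler_norm_sum _ _ _)) //.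
apply: (@le_trans _ _ ((\sum_j `|A i j|) * `|B|)).
  rewrite mulr_suml; apply: ler_sum => j _; rewrite normrM ler_wpM2l //.
  exact: normr_entry_le.
by rewrite ler_wpM2r // (bigD1 i) //= lerDl sumr_ge0.
Qed.

Lemma continuous_mulmx (T : topologicalType) p q s (A : 'M[R]_(p, q))
    (a : T -> 'M[R]_(q, s)) :
  continuous a -> continuous (fun t => A *m a t).
Proof.
move=> ac t; apply: continuous_comp (ac t) _.
apply: (@bounded_linear_continuous _ _ _ (mulmx A)); apply/linear_boundedP.
by near=> C => B; rewrite (le_trans (normr_mulmx_le A B)) // ler_wpM2r.
Unshelve. all: by end_near. Qed.

Lemma sqnorm_mulmx_le p q (A : 'M[R]_(p, q)) :
  exists2 K, 0 <= K & forall v, sqnorm (A *m v) <= K * sqnorm v.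
Proof.
set C := \sum_i \sum_j `|A i j|.
have C0 : 0 <= C by apply: sumr_ge0 => i _; apply: sumr_ge0.
exists (p%:R * C ^+ 2) => [|v]; first by rewrite mulr_ge0 ?sqr_ge0.
apply: (le_trans (sqnorm_le_sqr_normr _)); rewrite -mulrA ler_wpM2l //.
have : `|A *m v| ^+ 2 <= (C * `|v|) ^+ 2.
  by rewrite lerXn2r ?nnegrE ?mulr_ge0 // normr_mulmx_le.
rewrite exprMn => /le_trans -> //.
by rewrite ler_wpM2l ?sqr_ge0 // sqr_normr_le_sqnorm.
Qed.

Lemma continuous_usubmx p q s :
  continuous (usubmx : 'M[R]_(p + q, s) -> 'M[R]_(p, s)).
Proof.
move=> u A /nbhs_ballP[e /= e0 eA].
apply/nbhs_ballP; exists e => //= v [_ uv]; apply: eA; split => // i j.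
by apply: (le_lt_trans _ (uv (lshift q i) j)); rewrite !mxE.
Qed.

Lemma continuous_dsubmx p q s :
  continuous (dsubmx : 'M[R]_(p + q, s) -> 'M[R]_(q, s)).
Proof.
move=> u A /nbhs_ballP[e /= e0 eA].
apply/nbhs_ballP; exists e => //= v [_ uv]; apply: eA; split => // i j.
by apply: (le_lt_trans _ (uv (rshift p i) j)); rewrite !mxE.
Qed.

Lemma continuous_col_mx (T : topologicalType) p q s
    (a : T -> 'M[R]_(p, s)) (b : T -> 'M[R]_(q, s)) :
  continuous a -> continuous b -> continuous (fun t => col_mx (a t) (b t)).
Proof.
move=> ac bc.
have -> : (fun t => col_mx (a t) (b t)) =
    (fun t => col_mx 1%:M 0 *m a t + col_mx 0 1%:M *m b t).
  apply/funext => t.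
  by rewrite !mul_col_mx !mul1mx !mul0mx add_col_mx addr0 add0r.
by apply: continuous_add; exact: continuous_mulmx.
Qed.

Lemma continuous_scalar_mx n : continuous (fun s : R => (s%:M : 'M[R]_n)).
Proof.
have -> : (fun s : R => (s%:M : 'M[R]_n)) = (fun s => s *: 1%:M).
  by apply/funext => s; rewrite scalemx1.
by move=> s; apply: (@continuousZ _ _ _ id); [exact: cvg_id | exact: cst_continuous].
Qed.

End MatrixNorm.

Section StronglyMonotone.
Variable R : realType.

Definition strongly_monotone d (c : R) (F : 'cV[R]_d -> 'cV[R]_d) :=
  forall x x', c * sqnorm (x - x') <= dotv (F x - F x') (x - x').

Lemma strongly_monotone_zero_dist d c (F1 F2 : 'cV[R]_d -> 'cV[R]_d) x1 x2 :
  0 < c -> strongly_monotone c F1 -> F1 x1 = 0 -> F2 x2 = 0 ->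
  c ^+ 2 * sqnorm (x1 - x2) <= sqnorm (F2 x2 - F1 x2).
Proof.
move=> c0 F1mono F1x1 F2x2.
have := F1mono x1 x2; rewrite F1x1 -F2x2 dotvC.
have := dotv_young (x1 - x2) (F2 x2 - F1 x2) c.
have := sqnorm_ge0 (x1 - x2); nra.
Qed.

Lemma strongly_monotone_zero_unique d c (F : 'cV[R]_d -> 'cV[R]_d) x1 x2 :
  0 < c -> strongly_monotone c F -> F x1 = 0 -> F x2 = 0 -> x1 = x2.
Proof.
move=> c0 Fmono Fx1 Fx2; apply/eqP; rewrite -subr_eq0; apply/eqP/sqnorm_eq0.
have := strongly_monotone_zero_dist c0 Fmono Fx1 Fx2.
rewrite subrr /sqnorm dotv0r pmulr_rle0 ?exprn_gt0 // => S0.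
by apply/eqP; rewrite eq_le S0 sqnorm_ge0.
Qed.

(* [`|_|] is the max norm of matrices; the factor [d.+1] absorbs its comparison
   with the Euclidean norm. *)
Lemma strongly_monotone_zero_normr_dist d c (F1 F2 : 'cV[R]_d -> 'cV[R]_d) x1 x2 :
  0 < c -> strongly_monotone c F1 -> F1 x1 = 0 -> F2 x2 = 0 ->
  `|x1 - x2| <= d.+1%:R / c * `|F2 x2 - F1 x2|.
Proof.
move=> c0 F1mono F1x1 F2x2.
rewrite -ler_sqr ?nnegrE ?mulr_ge0 ?invr_ge0 ?(ltW c0) //.
rewrite -(ler_pM2l (exprn_gt0 2 c0)) exprMn expr_div_n [leRHS]mulrA.
rewrite [c ^+ 2 * (_ / _)]mulrC divfK ?expf_neq0 ?gt_eqF //.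
apply: le_trans (_ : c ^+ 2 * sqnorm (x1 - x2) <= _).
  by rewrite ler_wpM2l ?sqr_ge0 // sqr_normr_le_sqnorm.
apply: (le_trans (strongly_monotone_zero_dist c0 F1mono F1x1 F2x2)).
apply: (le_trans (sqnorm_le_sqr_normr _)); rewrite ler_wpM2r ?sqr_ge0 //.
by rewrite -natrX ler_nat (leq_trans (leqnSn d)) // expnS leq_pmulr // expn_gt0.
Qed.

Lemma continuous_strongly_monotone_zero (T : topologicalType) d c
    (G : T -> 'cV[R]_d -> 'cV[R]_d) (g : T -> 'cV[R]_d) :
  0 < c -> (forall t, strongly_monotone c (G t)) ->
  (forall w, continuous (G^~ w)) -> (forall t, G t (g t) = 0) ->
  continuous g.
Proof.
move=> c0 Gmono Gc gzero t; apply/cvgrPdist_lt => e e0.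
have C0 : 0 < d.+1%:R / c by rewrite divr_gt0.
near=> s; rewrite distrC.
have := strongly_monotone_zero_normr_dist c0 (Gmono s) (gzero s) (gzero t).
move/le_lt_trans; apply; rewrite mulrC -ltr_pdivlMr //; near: s.
by apply: (@cvgr_dist_lt _ _ _ _ _ _ _ (Gc (g t) t)); rewrite divr_gt0.
Unshelve. all: by end_near. Qed.

Lemma real_strongly_monotone_has_zero (h : R -> R) c :
  0 < c -> continuous h ->
  (forall s t, c * (s - t) ^+ 2 <= (h s - h t) * (s - t)) ->
  exists s, h s = 0.
Proof.
move=> c0 hc hmono.
pose b := `|h 0| / c + 1.
have b0 : 0 < b by rewrite ltr_wpDl ?divr_ge0 ?(ltW c0).
have cb : c * b = `|h 0| + c by rewrite mulrDr mulr1 mulrC divfK ?gt_eqF.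
have hb : 0 <= h b.
  have := hmono b 0; rewrite !subr0 => hb0.
  have := ler_norm (- h 0); rewrite normrN; nra.
have ha : h (- b) <= 0.
  have := hmono 0 (- b); rewrite sub0r opprK => ha0.
  have := ler_norm (h 0); nra.
have hab : Num.min (h (- b)) (h b) <= 0 <= Num.max (h (- b)) (h b).
  by rewrite ge_min le_max ha hb orbT.
have [s _ hs] := IVT (ltW (gtrN b0)) (continuous_subspaceT hc) hab.
by exists s.
Qed.

Lemma sqnorm_scalar_mx (a : R) : sqnorm (a%:M : 'cV[R]_1) = a ^+ 2.
Proof. by rewrite /sqnorm /dotv big_ord1 mxE expr2. Qed.

Section Slice.
Variables (d : nat) (c : R) (F : 'cV[R]_(1 + d) -> 'cV[R]_(1 + d)).
Hypotheses (c_gt0 : 0 < c) (F_cont : continuous F) (F_mono : strongly_monotone c F).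
Hypothesis zero_in_dim_d : forall G : 'cV[R]_d -> 'cV[R]_d,
  continuous G -> strongly_monotone c G -> exists u, G u = 0.

Let X (s : R) (u : 'cV[R]_d) : 'cV[R]_(1 + d) := col_mx s%:M u.
Let slice s u := dsubmx (F (X s u)).

Let sqnorm_X_sub s t u v : sqnorm (X s u - X t v) = (s - t) ^+ 2 + sqnorm (u - v).
Proof. by rewrite opp_col_mx add_col_mx sqnorm_col_mx -raddfB sqnorm_scalar_mx. Qed.

Let slice_strongly_monotone s : strongly_monotone c (slice s).
Proof.
move=> u v; have := F_mono (X s u) (X s v).
rewrite sqnorm_X_sub subrr expr0n add0r.
rewrite -[F (X s u)]vsubmxK -[F (X s v)]vsubmxK.
rewrite !opp_col_mx !add_col_mx dotv_col_mx -raddfB subrr.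
by rewrite dotv0r add0r.
Qed.

Let slice_continuous s : continuous (slice s).
Proof.
move=> u; apply: continuous_comp; last exact: continuous_dsubmx.
apply: continuous_comp; last exact: F_cont.
apply: (continuous_col_mx (@cst_continuous _ _ (s%:M : 'cV[R]_1))).
by move=> v; exact: cvg_id.
Qed.

Let slice_continuous_param u : continuous (slice^~ u).
Proof.
move=> s; apply: continuous_comp; last exact: continuous_dsubmx.
apply: continuous_comp; last exact: F_cont.
exact: (continuous_col_mx (@continuous_scalar_mx R 1) (@cst_continuous _ _ u)).
Qed.

Let U_ex s : exists u, slice s u = 0.
Proof.
by apply: zero_in_dim_d; [exact: slice_continuous | exact: slice_strongly_monotone].
Qed.

Let U s := sval (cid (U_ex s)).
Let U_zero s : slice s (U s) = 0 := svalP (cid (U_ex s)).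

Let U_cont : continuous U.
Proof.
exact: continuous_strongly_monotone_zero c_gt0 slice_strongly_monotone
  slice_continuous_param U_zero.
Qed.

Let Fu s := usubmx (F (X s (U s))).

Let F_XU s : F (X s (U s)) = col_mx (Fu s) 0.
Proof. by rewrite -(U_zero s) vsubmxK. Qed.

Let h s := Fu s 0 0.

Let h_cont : continuous h.
Proof.
move=> s; apply: (continuous_comp (g := fun M : 'cV[R]_1 => M 0 0)).
  2: exact: coord_continuous.
apply: continuous_comp; last exact: continuous_usubmx.
apply: continuous_comp; last exact: F_cont.
exact: (continuous_col_mx (@continuous_scalar_mx R 1) U_cont).
Qed.

Let h_strongly_monotone s t : c * (s - t) ^+ 2 <= (h s - h t) * (s - t).
Proof.
have := F_mono (X s (U s)) (X t (U t)).
rewrite sqnorm_X_sub !F_XU /X !opp_col_mx !add_col_mx subrr dotv_col_mx.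
rewrite [dotv 0 _]dotvC dotv0r addr0.
have -> : dotv (Fu s - Fu t) (s%:M - t%:M) = (h s - h t) * (s - t).
  by rewrite /dotv big_ord1 /h /Fu !mxE !eqxx !mulr1n.
apply: le_trans.
by rewrite ler_wpM2l ?(ltW c_gt0) // lerDl sqnorm_ge0.
Qed.

Lemma strongly_monotone_has_zero_step : exists x, F x = 0.
Proof.
have [s0 hs0] := real_strongly_monotone_has_zero c_gt0 h_cont h_strongly_monotone.
exists (X s0 (U s0)); rewrite F_XU; suff -> : Fu s0 = 0 by rewrite col_mx0.
by apply/matrixP => i j; rewrite !ord1 [RHS]mxE.
Qed.

End Slice.

Lemma strongly_monotone_has_zero d c (F : 'cV[R]_d -> 'cV[R]_d) :
  0 < c -> continuous F -> strongly_monotone c F -> exists x, F x = 0.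
Proof.
move=> c0; elim: d F => [F _ _|d IH F Fc Fm]; first by exists 0; apply: flatmx0.
exact: strongly_monotone_has_zero_step c0 Fc Fm IH.
Qed.

End StronglyMonotone.

Section ProjectorAlongKernel.
Variables (R : realType) (m k : nat) (M : 'M[R]_(m, k)) (P : 'M[R]_k).
Hypothesis MP : projector_along_ker M P.

Lemma mulmx_projector_ker (z : 'cV[R]_k) : M *m (P *m z) = M *m z.
Proof.
case: MP => PP Pker; apply/eqP; rewrite -subr_eq0 -mulmxBr; apply/eqP/Pker.
by rewrite mulmxBr mulmxA PP subrr.
Qed.

Lemma sqnorm_projector_le :
  exists2 K, 0 <= K & forall v, sqnorm (P *m v) <= K * sqnorm (M *m (P *m v)).
Proof.
case: MP => PP Pker.
have /submxP [L PL] : (P <= M *m P)%MS.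
  by apply: submx_of_kernel_sub => z; rewrite -mulmxA => /Pker; rewrite mulmxA PP.
have [K K0 LK] := sqnorm_mulmx_le L.
by exists K => // v; rewrite {1}PL -!mulmxA; exact: LK.
Qed.

(* The [(1 - P)]-term makes the map strongly monotone on all of [R^k] and
   vanishes on the range of [P]. *)
Definition regularized (F : 'cV[R]_m -> 'cV[R]_m) (b w : 'cV[R]_k) : 'cV[R]_k :=
  b + M^T *m F (M *m (P *m w)) + (1%:M - P)^T *m ((1%:M - P) *m w).

Lemma regularized_range F b z : regularized F b (P *m z) = b + M^T *m F (M *m z).
Proof.
case: MP => PP _.
rewrite /regularized !mulmx_projector_ker (mulmxA (1%:M - P)) mulmxBl mul1mx PP.
by rewrite subrr mul0mx mulmx0 addr0.
Qed.

Lemma regularized_continuous F b : continuous F -> continuous (regularized F b).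
Proof.
move=> Fc; apply: continuous_add; first apply: continuous_add.
- exact: cst_continuous.
- apply: continuous_mulmx => w.
  apply: (@continuous_comp _ _ _ (fun t => M *m (P *m t)) F); last exact: Fc.
  by move: w; do 2!apply: continuous_mulmx; move=> w; exact: cvg_id.
- by do 2!apply: continuous_mulmx; move=> w; exact: cvg_id.
Qed.

Lemma regularized_strongly_monotone c : 0 < c ->
  exists2 c', 0 < c' &
    forall F b, strongly_monotone c F -> strongly_monotone c' (regularized F b).
Proof.
move=> c0; have [K K0 PK] := sqnorm_projector_le.
set Q := 1%:M - P.
pose c' := Num.min c 1 / (2 * (K + 1)).
have K1 : 0 < 2 * (K + 1) by lra.
have c'0 : 0 < c' by rewrite divr_gt0 // lt_min c0 ltr01.
exists c' => // F b Fmono w w'.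
have -> : regularized F b w - regularized F b w' =
    M^T *m (F (M *m (P *m w)) - F (M *m (P *m w'))) + Q^T *m (Q *m (w - w')).
  by rewrite /regularized opprD addrACA [b + _]addrC addrKA !mulmxBr.
have MPd : M *m (w - w') = M *m (P *m w) - M *m (P *m w').
  by rewrite !mulmx_projector_ker mulmxBr.
rewrite dotvDl !dotv_trmx MPd.
have := Fmono (M *m (P *m w)) (M *m (P *m w')).
have := PK (w - w'); rewrite mulmx_projector_ker MPd.
have : sqnorm (w - w') <= 2 * sqnorm (P *m (w - w')) + 2 * sqnorm (Q *m (w - w')).
  rewrite -{1}[w - w'](subrK (P *m (w - w'))) addrC.
  by rewrite -{2}[w - w']mul1mx -mulmxBl sqnormD_le.
rewrite -/(sqnorm (Q *m (w - w'))).
have := sqnorm_ge0 (M *m (P *m w) - M *m (P *m w')).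
have := sqnorm_ge0 (Q *m (w - w')).
set A := sqnorm (M *m _ - _); set B := sqnorm (Q *m _); set S := sqnorm (w - w').
move=> B0 A0 hS hP hD.
have mc_c : Num.min c 1 <= c by rewrite ge_min lexx.
have mc_1 : Num.min c 1 <= 1 by rewrite ge_min lexx orbT.
have : c' * S <= Num.min c 1 * (A + B).
  rewrite -[Num.min c 1](divfK (lt0r_neq0 K1)) -/c' -[leRHS]mulrA ler_pM2l //; nra.
nra.
Qed.

End ProjectorAlongKernel.

Theorem lemma3 (R : realType) (m n k : nat)
  (M : 'M[R]_(m, k)) (P : 'M[R]_k)
  (f : 'cV[R]_m -> 'cV[R]_n -> 'cV[R]_m) (r : 'cV[R]_n -> 'cV[R]_k) :
  projector_along_ker M P ->
  continuous (fun p : 'cV[R]_m * 'cV[R]_n => f p.1 p.2) ->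
  strongly_monotone_x f ->
  continuous r ->
  exists g : 'cV[R]_n -> 'cV[R]_k,
    continuous g /\
    forall (z : 'cV[R]_k) (y : 'cV[R]_n),
      M^T *m f (M *m z) y + P^T *m r y = 0 <-> P *m z = g y.
Proof.
move=> MP fc [c [c0 fmono]] rc.
have [c' c'0 reg_mono] := regularized_strongly_monotone MP c0.
pose G y := regularized M P (f^~ y) (P^T *m r y).
have G_mono y : strongly_monotone c' (G y) := reg_mono _ _ (fmono y).
have G_zero y : exists w, G y w = 0.
  apply: strongly_monotone_has_zero c'0 _ (G_mono y).
  exact/regularized_continuous/continuous_in_fst.
pose g y := sval (cid (G_zero y)).
have g_zero y : G y (g y) = 0 := svalP (cid (G_zero y)).
exists g; split.
  apply: continuous_strongly_monotone_zero c'0 G_mono _ g_zero => w.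
  rewrite /G /regularized; apply: continuous_add; last exact: cst_continuous.
  apply: continuous_add; apply: continuous_mulmx; first exact: rc.
  exact: continuous_in_snd.
move=> z y; rewrite addrC -(regularized_range MP (f^~ y)) -/(G y (P *m z)).
split=> [Gz | ->]; last exact: g_zero.
exact: strongly_monotone_zero_unique c'0 (G_mono y) Gz (g_zero y).
Qed.
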